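(* Let $a\in(0,1)$ and let $h:\mathbb R_+\to\mathbb R_+$ be differentiable, bounded and bounded away from $0$ on $(0,\infty)$, with $h_t=h_{at}$ for all $t>0$. If $\zeta>-1$, then $$\int_1^ts^\zeta h_s\,ds\sim t^{\zeta+1}\tilde h_t\quad\text{as }t\to\infty,\qquad\text{where}\quad\tilde h_t=-\log a\cdot\int_0^\infty a^{r(1+\zeta)}h_{a^rt}\,dr,$$ and $f\sim g$ means $f_t/g_t\to1$. *)

From Stdlib Require Import Reals.
From Coquelicot Require Import Coquelicot.
Open Scope R_scope.

Definition htilde (a zeta : R) (h : R -> R) (t : R) : R :=
  - ln a * RInt_gen (fun r => Rpower a (r * (1 + zeta)) * h (Rpower a r * t))
                    (at_point 0) (Rbar_locally p_infty).

(* The substitution s = a^r t maps r in [0, log t / (-log a)] onto s in [1, t] and turns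
   t^(zeta+1) htilde_t into the integral of s^zeta h_s over [1, t] plus the contribution of
   r > log t / (-log a), which is at most M / (1 + zeta) when h <= M.  Since h >= m > 0 and
   zeta > -1, the integral over [1, t] grows like t^(zeta+1), so this bounded gap forces the
   ratio to 1. *)
From Stdlib Require Import Reals Lra Classical.
From Coquelicot Require Import Coquelicot.
Open Scope R_scope.

Lemma continuous_of_ex_derive (f : R -> R) x : ex_derive f x -> continuous f x.
Proof. apply (@ex_derive_continuous R_AbsRing R_NormedModule). Qed.

Lemma is_lim_scal_p_infty (f : R -> R) (x : Rbar) (k : R) :
  0 < k -> is_lim f x p_infty -> is_lim (fun y => k * f y) x p_infty.
Proof.
  intros Hk Hf.
  assert (Hmul : Rbar_mult k p_infty = p_infty).
  { simpl. destruct Rle_dec; [destruct Rle_lt_or_eq_dec|]; auto; lra. }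
  rewrite <- Hmul. now apply is_lim_scal_l.
Qed.

Lemma is_lim_Rpower_p_infty (p : R) :
  0 < p -> is_lim (fun t => Rpower t p) p_infty p_infty.
Proof.
  intros Hp. unfold Rpower.
  apply (is_lim_comp exp (fun t => p * ln t) p_infty p_infty p_infty).
  - exact is_lim_exp_p.
  - apply is_lim_scal_p_infty, is_lim_ln_p. exact Hp.
  - exists 0. discriminate.
Qed.

Lemma is_lim_div_of_bounded_gap (G D : R -> R) (K : R) :
  is_lim G p_infty p_infty ->
  Rbar_locally p_infty (fun t => G t <= D t <= G t + K) ->
  is_lim (fun t => G t / D t) p_infty 1.
Proof.
  intros HG Hgap.
  assert (Gpos : Rbar_locally p_infty (fun t => 0 < G t)).
  { apply (HG (fun x => 0 < x)). exists 0. auto. }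
  apply (is_lim_le_le_loc (fun t => 1 - K * / G t) (fun _ => 1)).
  - destruct Hgap as [x1 H1], Gpos as [x2 H2]. exists (Rmax x1 x2). intros t Ht.
    destruct (H1 t (Rle_lt_trans _ _ _ (Rmax_l _ _) Ht)) as [GD DG].
    specialize (H2 t (Rle_lt_trans _ _ _ (Rmax_r _ _) Ht)).
    split.
    + apply (Rmult_le_reg_r (G t * D t)); [nra|].
      field_simplify; [|lra|lra]. nra.
    + apply (Rmult_le_reg_r (D t)); [lra|]. field_simplify; lra.
  - eapply is_lim_minus.
    + apply is_lim_const.
    + apply is_lim_scal_l, is_lim_inv; [exact HG|discriminate].
    + unfold is_Rbar_minus, is_Rbar_plus; simpl. f_equal. f_equal. ring.
  - apply is_lim_const.
Qed.

Section NonnegImproperIntegral.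

Variables (f : R -> R) (a : R).
Hypothesis f_cont : forall x, a <= x -> continuous f x.
Hypothesis f_ge0 : forall x, a <= x -> 0 <= f x.

Lemma ex_RInt_right x y : a <= x -> a <= y -> ex_RInt f x y.
Proof.
  intros Hx Hy. apply (@ex_RInt_continuous R_CompleteNormedModule).
  intros z [Hz _]. apply f_cont. apply Rle_trans with (Rmin x y); [apply Rmin_glb|]; lra.
Qed.

Lemma RInt_right_Chasles x y : a <= x -> a <= y -> RInt f a y = RInt f a x + RInt f x y.
Proof.
  intros Hx Hy. symmetry. apply (@RInt_Chasles R_CompleteNormedModule); apply ex_RInt_right; lra.
Qed.

Lemma RInt_right_ge0 x y : a <= x <= y -> 0 <= RInt f x y.
Proof.
  intros Hxy. apply RInt_ge_0; [lra|apply ex_RInt_right; lra|].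
  intros z Hz. apply f_ge0. lra.
Qed.

Lemma is_RInt_gen_pinfty_lub l :
  is_lub (fun z => exists x, a <= x /\ z = RInt f a x) l ->
  is_RInt_gen f (at_point a) (Rbar_locally p_infty) l.
Proof.
  intros [Hub Hlub] P [eps HP].
  assert (Happrox : exists x0, a <= x0 /\ l - eps < RInt f a x0).
  { apply NNPP. intros Hn.
    assert (l <= l - eps).
    { apply Hlub. intros z [x [Hx ->]]. apply Rnot_lt_le. intros Hlt. apply Hn. eauto. }
    destruct eps; simpl in *; lra. }
  destruct Happrox as [x0 [Hx0 Hlt]].
  apply (Filter_prod _ _ _ (fun x => x = a) (fun y => x0 < y)); [reflexivity|now exists x0|].
  intros u v -> Hv. exists (RInt f a v). split.
  - apply (@RInt_correct R_CompleteNormedModule), ex_RInt_right; lra.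
  - apply HP. apply Rabs_def1.
    + assert (RInt f a v <= l) by (apply Hub; exists v; split; [lra|auto]).
      change (RInt f a v - l < eps). destruct eps; simpl in *; lra.
    + rewrite (RInt_right_Chasles x0 v) by lra.
      assert (0 <= RInt f x0 v) by (apply RInt_right_ge0; lra).
      change (- eps < RInt f a x0 + RInt f x0 v - l). lra.
Qed.

Lemma RInt_gen_pinfty_bounds (B : R -> R) :
  (forall x y, a <= y <= x -> RInt f y x <= B y) ->
  forall y, a <= y ->
  RInt f a y <= RInt_gen f (at_point a) (Rbar_locally p_infty) <= RInt f a y + B y.
Proof.
  intros HB y Hy.
  set (E := fun z => exists x, a <= x /\ z = RInt f a x).
  assert (Ebound : forall x, a <= x -> RInt f a x <= RInt f a y + B y).
  { intros x Hx. destruct (Rle_dec y x).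
    - rewrite (RInt_right_Chasles y x) by lra. pose proof (HB x y ltac:(lra)). lra.
    - rewrite (RInt_right_Chasles x y) by lra.
      assert (0 <= RInt f x y) by (apply RInt_right_ge0; lra).
      assert (0 <= B y).
      { replace 0 with (RInt f y y) by (rewrite RInt_point; reflexivity). apply HB. lra. }
      lra. }
  destruct (completeness E) as [l Hl].
  - exists (RInt f a y + B y). intros z [x [Hx ->]]. now apply Ebound.
  - exists (RInt f a a). exists a. split; [lra|auto].
  - rewrite (is_RInt_gen_unique f l (is_RInt_gen_pinfty_lub l Hl)). split.
    + apply Hl. exists y. auto.
    + apply Hl. intros z [x [Hx ->]]. now apply Ebound.
Qed.

End NonnegImproperIntegral.

Lemma Rpower_scaled_pos (a t r : R) : 0 < t -> 0 < Rpower a r * t.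
Proof. intros Ht. apply Rmult_lt_0_compat; [apply exp_pos|exact Ht]. Qed.

Lemma RInt_comp_geom (f : R -> R) (a t x y : R) :
  0 < a -> 0 < t -> (forall s, 0 < s -> continuous f s) ->
  RInt (fun r => ln a * (Rpower a r * t) * f (Rpower a r * t)) x y
  = RInt f (Rpower a x * t) (Rpower a y * t).
Proof.
  intros Ha Ht Hf. apply is_RInt_unique.
  apply (is_RInt_ext (fun r => scal (ln a * Rpower a r * t) (f (Rpower a r * t)))).
  { intros r _. unfold scal; simpl; unfold mult; simpl. ring. }
  apply (@is_RInt_comp R_CompleteNormedModule f (fun r => Rpower a r * t) (fun r => ln a * Rpower a r * t)).
  - intros r _. apply Hf, Rpower_scaled_pos, Ht.
  - intros r _. split.
    + unfold Rpower. auto_derive; auto. ring.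
    + apply continuous_of_ex_derive. unfold Rpower. auto_derive. auto.
Qed.

Lemma is_RInt_Rpower (zeta t : R) :
  zeta <> -1 -> 0 < t ->
  is_RInt (fun s => Rpower s zeta) 1 t ((Rpower t (zeta + 1) - 1) / (zeta + 1)).
Proof.
  intros Hz Ht.
  assert (Hder : forall s, 0 < s -> is_derive (fun s => Rpower s (zeta + 1)) s ((zeta + 1) * Rpower s zeta)).
  { intros s Hs. apply is_derive_Reals.
    replace zeta with (zeta + 1 - 1) at 2 by ring. now apply derivable_pt_lim_power. }
  assert (Hpos : forall s, Rmin 1 t <= s <= Rmax 1 t -> 0 < s).
  { intros s [Hs _]. apply Rlt_le_trans with (Rmin 1 t); [apply Rmin_glb_lt|]; lra. }
  replace ((Rpower t (zeta + 1) - 1) / (zeta + 1))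
    with (minus (/ (zeta + 1) * Rpower t (zeta + 1)) (/ (zeta + 1) * Rpower 1 (zeta + 1))).
  2:{ unfold minus, plus, opp, Rpower; simpl. rewrite ln_1, Rmult_0_r, exp_0. field. lra. }
  apply (is_RInt_derive (fun s => / (zeta + 1) * Rpower s (zeta + 1))).
  - intros s Hs. replace (Rpower s zeta) with (/ (zeta + 1) * ((zeta + 1) * Rpower s zeta))
      by (field; lra).
    apply is_derive_scal, Hder, Hpos, Hs.
  - intros s Hs. apply continuous_of_ex_derive.
    exists (zeta * Rpower s (zeta - 1)). apply is_derive_Reals, derivable_pt_lim_power, Hpos, Hs.
Qed.

Lemma RInt_exp_le (c y x : R) :
  c < 0 -> y <= x -> RInt (fun r => exp (c * r)) y x <= exp (c * y) / - c.
Proof.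
  intros Hc Hyx.
  assert (Hint : is_RInt (fun r => exp (c * r)) y x ((exp (c * x) - exp (c * y)) / c)).
  { replace ((exp (c * x) - exp (c * y)) / c) with (minus (exp (c * x) / c) (exp (c * y) / c))
      by (unfold minus, plus, opp; simpl; field; lra).
    apply (is_RInt_derive (fun r => exp (c * r) / c)).
    - intros r _. auto_derive; auto. field. lra.
    - intros r _. apply continuous_of_ex_derive. auto_derive. auto. }
  rewrite (is_RInt_unique _ _ _ _ Hint).
  assert (0 < exp (c * x) / - c) by (apply Rdiv_lt_0_compat; [apply exp_pos|lra]).
  replace ((exp (c * x) - exp (c * y)) / c) with (exp (c * y) / - c - exp (c * x) / - c)
    by (field; lra).
  lra.
Qed.

Lemma Rpower_scaled (a t r zeta : R) :
  0 < a -> 0 < t ->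
  Rpower a r * t * Rpower (Rpower a r * t) zeta = Rpower a (r * (1 + zeta)) * Rpower t (zeta + 1).
Proof.
  intros Ha Ht.
  rewrite <- Rpower_mult_distr by (try apply exp_pos; exact Ht).
  rewrite Rpower_mult.
  replace (r * (1 + zeta)) with (r + r * zeta) by ring.
  rewrite !Rpower_plus, Rpower_1 by exact Ht. ring.
Qed.

Section ScaleInvariantAverage.

Variables (a zeta m M : R) (h : R -> R).
Hypothesis a_in : 0 < a < 1.
Hypothesis zeta_gt : -1 < zeta.
Hypothesis h_cont : forall s, 0 < s -> continuous h s.
Hypothesis m_pos : 0 < m.
Hypothesis h_bounds : forall s, 0 < s -> m <= h s <= M.

Let integrand t r := Rpower a (r * (1 + zeta)) * h (Rpower a r * t).
Let decay := (1 + zeta) * ln a.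

Lemma ln_a_neg : ln a < 0.
Proof. rewrite <- ln_1. apply ln_increasing; lra. Qed.

Lemma decay_neg : decay < 0.
Proof. pose proof ln_a_neg. unfold decay. nra. Qed.

Lemma weighted_continuous s : 0 < s -> continuous (fun s => Rpower s zeta * h s) s.
Proof.
  intros Hs. apply (@continuous_mult R_UniformSpace R_AbsRing); [|apply h_cont, Hs].
  apply continuous_of_ex_derive. exists (zeta * Rpower s (zeta - 1)).
  apply is_derive_Reals, derivable_pt_lim_power, Hs.
Qed.

Lemma integrand_continuous t r : 0 < t -> continuous (integrand t) r.
Proof.
  intros Ht. apply (@continuous_mult R_UniformSpace R_AbsRing).
  - apply continuous_of_ex_derive. unfold Rpower. auto_derive. auto.
  - apply (@continuous_comp R_UniformSpace R_UniformSpace R_UniformSpace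
             (fun r => Rpower a r * t) h).
    + apply continuous_of_ex_derive. unfold Rpower. auto_derive. auto.
    + apply h_cont, Rpower_scaled_pos, Ht.
Qed.

Lemma integrand_bounds t r : 0 < t -> 0 <= integrand t r <= M * exp (decay * r).
Proof.
  intros Ht. destruct (h_bounds _ (Rpower_scaled_pos a t r Ht)).
  unfold integrand, decay. change (Rpower a (r * (1 + zeta))) with (exp (r * (1 + zeta) * ln a)).
  replace ((1 + zeta) * ln a * r) with (r * (1 + zeta) * ln a) by ring.
  pose proof (exp_pos (r * (1 + zeta) * ln a)). split; nra.
Qed.

Lemma RInt_integrand_tail t x y :
  0 < t -> y <= x -> RInt (integrand t) y x <= M * exp (decay * y) / - decay.
Proof.
  intros Ht Hyx.
  assert (Hexp : ex_RInt (fun r => exp (decay * r)) y x).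
  { apply (@ex_RInt_continuous R_CompleteNormedModule). intros r _.
    apply continuous_of_ex_derive. auto_derive. auto. }
  apply Rle_trans with (RInt (fun r => M * exp (decay * r)) y x).
  - apply RInt_le; [exact Hyx| | |intros r _; apply integrand_bounds, Ht].
    + apply (@ex_RInt_continuous R_CompleteNormedModule). intros r _.
      apply integrand_continuous, Ht.
    + apply (ex_RInt_scal _ _ _ M Hexp).
  - replace (RInt (fun r => M * exp (decay * r)) y x)
      with (M * RInt (fun r => exp (decay * r)) y x) by (symmetry; exact (RInt_scal _ _ _ M Hexp)).
    assert (0 <= M) by (destruct (h_bounds 1 Rlt_0_1); lra).
    unfold Rdiv. rewrite Rmult_assoc.
    apply Rmult_le_compat_l; [lra|]. apply RInt_exp_le; [apply decay_neg|exact Hyx].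
Qed.

Lemma RInt_integrand_head t :
  0 < t ->
  - ln a * Rpower t (zeta + 1) * RInt (integrand t) 0 (ln t / - ln a)
  = RInt (fun s => Rpower s zeta * h s) 1 t.
Proof.
  intros Ht. pose proof ln_a_neg as Hln.
  set (R0 := ln t / - ln a).
  assert (E0 : Rpower a 0 * t = t) by (rewrite Rpower_O; lra).
  assert (ER0 : Rpower a R0 * t = 1).
  { unfold R0, Rpower. replace (ln t / - ln a * ln a) with (- ln t) by (field; lra).
    rewrite exp_Ropp, exp_ln by exact Ht. field. lra. }
  assert (Hex : ex_RInt (integrand t) 0 R0).
  { apply (@ex_RInt_continuous R_CompleteNormedModule). intros r _.
    apply integrand_continuous, Ht. }
  pose proof (RInt_comp_geom _ a t R0 0 ltac:(lra) Ht weighted_continuous) as Hcomp.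
  rewrite ER0, E0 in Hcomp. etransitivity; [|exact Hcomp].
  set (T := Rpower t (zeta + 1)).
  assert (Hpt : forall r, ln a * (Rpower a r * t) * (Rpower (Rpower a r * t) zeta * h (Rpower a r * t))
                          = ln a * T * integrand t r).
  { intros r. unfold integrand, T.
    transitivity (ln a * (Rpower a r * t * Rpower (Rpower a r * t) zeta) * h (Rpower a r * t));
      [ring|rewrite Rpower_scaled by lra; ring]. }
  rewrite (RInt_ext (fun r => ln a * (Rpower a r * t) * (Rpower (Rpower a r * t) zeta * h (Rpower a r * t)))
                    (fun r => ln a * T * integrand t r)) by (intros r _; apply Hpt).
  assert (Hscal : RInt (fun r => ln a * T * integrand t r) R0 0 = ln a * T * RInt (integrand t) R0 0)
    by exact (RInt_scal _ _ _ _ (ex_RInt_swap _ _ _ Hex)).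
  rewrite Hscal, <- (opp_RInt_swap _ _ _ Hex).
  unfold opp; simpl. ring.
Qed.

Lemma htilde_gap t :
  1 < t ->
  RInt (fun s => Rpower s zeta * h s) 1 t <= Rpower t (zeta + 1) * htilde a zeta h t
  <= RInt (fun s => Rpower s zeta * h s) 1 t + M / (1 + zeta).
Proof.
  intros Ht. assert (Ht0 : 0 < t) by lra.
  pose proof ln_a_neg as Hln. pose proof decay_neg as Hdecay.
  assert (Hlnt : 0 < ln t) by (rewrite <- ln_1; apply ln_increasing; lra).
  set (R0 := ln t / - ln a).
  assert (HR0 : 0 <= R0) by (apply Rlt_le, Rdiv_lt_0_compat; lra).
  destruct (RInt_gen_pinfty_bounds (integrand t) 0
              (fun r _ => integrand_continuous t r Ht0) (fun r _ => proj1 (integrand_bounds t r Ht0))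
              (fun y => M * exp (decay * y) / - decay)
              (fun x y Hyx => RInt_integrand_tail t x y Ht0 (proj2 Hyx)) R0 HR0) as [Hlow Hup].
  rewrite <- (RInt_integrand_head t Ht0). fold R0.
  set (L := RInt_gen (integrand t) (at_point 0) (Rbar_locally p_infty)) in *.
  change (htilde a zeta h t) with (- ln a * L).
  set (T := Rpower t (zeta + 1)).
  assert (HT : 0 < T) by apply exp_pos.
  assert (Htail : - ln a * T * (M * exp (decay * R0) / - decay) = M / (1 + zeta)).
  { replace (decay * R0) with (- ((zeta + 1) * ln t)) by (unfold decay, R0; field; lra).
    rewrite exp_Ropp. unfold T, Rpower, decay. pose proof (exp_pos ((zeta + 1) * ln t)).
    field. repeat split; lra. }
  replace (T * (- ln a * L)) with (- ln a * T * L) by ring.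
  rewrite <- Htail, <- Rmult_plus_distr_l.
  assert (0 < - ln a * T) by nra.
  split; apply Rmult_le_compat_l; lra.
Qed.

Lemma RInt_weighted_ge t :
  1 <= t -> m * ((Rpower t (zeta + 1) - 1) / (zeta + 1)) <= RInt (fun s => Rpower s zeta * h s) 1 t.
Proof.
  intros Ht.
  assert (Hpow := is_RInt_Rpower zeta t ltac:(lra) ltac:(lra)).
  rewrite <- (is_RInt_unique _ _ _ _ Hpow).
  assert (Hscal : RInt (fun s => m * Rpower s zeta) 1 t = m * RInt (fun s => Rpower s zeta) 1 t)
    by exact (RInt_scal _ _ _ _ (ex_intro _ _ Hpow)).
  rewrite <- Hscal. apply RInt_le; [exact Ht| | |].
  - apply (ex_RInt_scal _ _ _ m (ex_intro _ _ Hpow)).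
  - apply (@ex_RInt_continuous R_CompleteNormedModule). intros s Hs.
    apply weighted_continuous. rewrite Rmin_left in Hs; lra.
  - intros s Hs. assert (0 < Rpower s zeta) by apply exp_pos.
    destruct (h_bounds s ltac:(lra)). nra.
Qed.

Lemma is_lim_RInt_weighted : is_lim (fun t => RInt (fun s => Rpower s zeta * h s) 1 t) p_infty p_infty.
Proof.
  apply (is_lim_le_p_loc (fun t => m * ((Rpower t (zeta + 1) - 1) / (zeta + 1)))).
  - exists 1. intros t Ht. apply RInt_weighted_ge. lra.
  - apply (is_lim_ext (fun t => m / (zeta + 1) * (Rpower t (zeta + 1) - 1))).
    { intros t. field. lra. }
    apply is_lim_scal_p_infty; [apply Rdiv_lt_0_compat; lra|].
    eapply is_lim_minus; [apply is_lim_Rpower_p_infty; lra|apply is_lim_const|reflexivity].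
Qed.

End ScaleInvariantAverage.

Theorem lemma2p4p3 (a zeta : R) (h : R -> R) :
  0 < a < 1 ->
  (forall t, 0 < t -> ex_derive h t) ->
  (exists m M, 0 < m /\ forall t, 0 < t -> m <= h t <= M) ->
  (forall t, 0 < t -> h t = h (a * t)) ->
  -1 < zeta ->
  is_lim (fun t => RInt (fun s => Rpower s zeta * h s) 1 t
                   / (Rpower t (zeta + 1) * htilde a zeta h t))
         p_infty 1.
Proof.
  intros Ha Hder [m [M [Hm Hbounds]]] _ Hzeta.
  assert (Hcont : forall s, 0 < s -> continuous h s)
    by (intros s Hs; apply continuous_of_ex_derive, Hder, Hs).
  apply (is_lim_div_of_bounded_gap _ _ (M / (1 + zeta))).
  - exact (is_lim_RInt_weighted zeta m M h Hzeta Hcont Hm Hbounds).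
  - exists 1. intros t Ht. exact (htilde_gap a zeta m M h Ha Hzeta Hcont Hm Hbounds t Ht).
Qed.
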